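(* Let $\Omega\subseteq\mathbb{R}^n$ be open, let $f_1,\dots,f_m:\Omega\to\mathbb{R}$ be differentiable, and let $W\subseteq\Omega$ be convex and bounded. Suppose there is $L\ge 0$ such that $$\|\nabla f_i(y)-\nabla f_i(z)\|\le L\|y-z\|\qquad\text{for all }y,z\in W,\ i=1,\dots,m,$$ and set $M=\sup_{i=1,\dots,m,\ x\in W}\|\nabla f_i(x)\|$ (which is finite). Then for all $y,z\in W$: 1. $\|\Lambda f(y)-\Lambda f(z)\|\le\sqrt{2LM}\,\|y-z\|^{1/2}$, so $x\mapsto\Lambda f(x)$ is Hölder continuous on $W$ with exponent $1/2$; 2. $\big|\,\|\Lambda f(y)\|-\|\Lambda f(z)\|\,\big|\le L\|y-z\|$, so $x\mapsto\|\Lambda f(x)\|$ is Lipschitz continuous on $W$.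
   Context: $\mathbb{R}^n$ carries the standard inner product $\langle\cdot,\cdot\rangle$ and Euclidean norm $\|\cdot\|$. For $x\in\Omega$, the (multiobjective) steepest descent direction is $$\Lambda f(x):=\operatorname{argmin}_{v\in\mathbb{R}^n}\Big(\max_{i=1,\dots,m}\langle v,\nabla f_i(x)\rangle+\tfrac12\|v\|^2\Big),$$ (the minimizer is unique since the objective is strongly convex). *)

From mathcomp Require Import all_boot.
From Stdlib Require Import Reals ClassicalEpsilon.
Open Scope R_scope.

Definition vec (n : nat) := 'I_n -> R.

Definition vzero {n : nat} : vec n := fun _ => 0.
Definition vadd {n : nat} (u v : vec n) : vec n := fun i => u i + v i.
Definition vsub {n : nat} (u v : vec n) : vec n := fun i => u i - v i.
Definition vscale {n : nat} (a : R) (u : vec n) : vec n := fun i => a * u i.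

Definition dot {n : nat} (u v : vec n) : R := \big[Rplus/0]_(i < n) (u i * v i).
Definition norm {n : nat} (u : vec n) : R := sqrt (dot u u).

Definition is_open {n : nat} (Omega : vec n -> Prop) : Prop :=
  forall x, Omega x -> exists r, r > 0 /\ forall y, norm (vsub y x) < r -> Omega y.

Definition is_convex {n : nat} (W : vec n -> Prop) : Prop :=
  forall x y t, W x -> W y -> 0 <= t <= 1 ->
    W (vadd (vscale (1 - t) x) (vscale t y)).

Definition is_bounded {n : nat} (W : vec n -> Prop) : Prop :=
  exists B, forall x, W x -> norm x <= B.

Definition has_gradient {n : nat} (f : vec n -> R) (x g : vec n) : Prop :=
  forall eps, eps > 0 -> exists delta, delta > 0 /\
    forall y, norm (vsub y x) < delta ->
      Rabs (f y - f x - dot g (vsub y x)) <= eps * norm (vsub y x).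

(* max_{i = 0..m-1} F i  (meaningful for m >= 1) *)
Fixpoint maxn_R (m : nat) (F : nat -> R) : R :=
  match m with
  | O => F O
  | S O => F O
  | S k => Rmax (maxn_R k F) (F k)
  end.

(* The objective of the steepest descent subproblem, where grad i x is
   the gradient of f_i at x. *)
Definition sd_obj {n : nat} (m : nat) (grad : nat -> vec n -> vec n)
  (x v : vec n) : R :=
  maxn_R m (fun i => dot v (grad i x)) + / 2 * (norm v) ^ 2.

(* Lambda f(x) := argmin_v sd_obj (chosen by Hilbert's epsilon; the
   minimizer exists and is unique). *)
Definition Lambda {n : nat} (m : nat) (grad : nat -> vec n -> vec n)
  (x : vec n) : vec n :=
  epsilon (inhabits vzero) (fun v => forall w, sd_obj m grad x v <= sd_obj m grad x w).

(* The steepest descent direction v = Λf(x) minimizes h_x(w) + |w|²/2, where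
   h_x(w) = max_i <w, ∇f_i(x)> is sublinear.  Convexity gives the first-order
   conditions h_x(v) = -|v|² and h_x(w) + <v, w> >= 0 for all w.  When the
   gradients at y and z are e-close, |h_y(w) - h_z(w)| <= |w| e; testing the
   conditions at y with b = Λf(z) and at z with a = Λf(y) yields
   |a - b|² <= (|a| + |b|) e and |b|² <= |a| |b| + |b| e.  Since |Λf(x)| <= M,
   taking e = L |y - z| gives both estimates. *)
From Stdlib Require Import Reals Lra Psatz ClassicalEpsilon.
From mathcomp Require Import all_boot all_order all_algebra.
From mathcomp Require Import all_classical all_reals all_analysis.
From mathcomp Require Import Rstruct Rstruct_topology.
Import Num.Theory.
Import numFieldNormedType.Exports.

Section Continuity.
Local Open Scope ring_scope.
Variable T : topologicalType.

Lemma continuous_Rplus (f g : T -> R) :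
  continuous f -> continuous g -> continuous (fun x => Rplus (f x) (g x)).
Proof. by move=> cf cg x; apply: (@continuousD _ R^o _ f g x (cf x) (cg x)). Qed.

Lemma continuous_Rmult (f g : T -> R) :
  continuous f -> continuous g -> continuous (fun x => Rmult (f x) (g x)).
Proof. by move=> cf cg x; apply: (continuousM (cf x) (cg x)). Qed.

Lemma continuous_Rmax (f g : T -> R) :
  continuous f -> continuous g -> continuous (fun x => Rmax (f x) (g x)).
Proof.
move=> cf cg x; rewrite (_ : (fun x => _) = f \max g); last first.
  by apply: funext => v; rewrite RmaxE.
exact: (continuous_max (cf x) (cg x)).
Qed.

Lemma continuous_bigRplus n (h : 'I_n -> T -> R) :
  (forall i, continuous (h i)) ->
  continuous (fun x => \big[Rplus/IZR 0]_(i < n) h i x).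
Proof.
elim: n h => [|n IH] h hc.
  by under eq_fun do rewrite big_ord0; exact: cst_continuous.
under eq_fun do rewrite big_ord_recr /=.
by apply: continuous_Rplus; [apply: IH | ].
Qed.

Lemma continuous_maxn_R m (h : nat -> T -> R) :
  (forall i, continuous (h i)) -> continuous (fun x => maxn_R m (fun i => h i x)).
Proof. by move=> hc; elim: m => [|[|k] IH] //=; apply: continuous_Rmax. Qed.

End Continuity.

Section Argmin.
Local Open Scope ring_scope.
Local Open Scope classical_set_scope.

Lemma exists_argmin_box n (F : vec n -> R) (K : R) : Rle 0 K ->
  continuous (fun v : 'rV[R]_n => F (fun i => v ord0 i)) ->
  (forall v i, Rlt K (Rabs (v i)) -> Rle (F vzero) (F v)) ->
  exists c, forall w, Rle (F c) (F w).
Proof.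
move=> /RleP K0 cF coercive.
pose box := [set v : 'rV[R]_n | forall i, `[- K, K]%classic (v ord0 i)].
have box_compact : compact box.
  by apply: (@rV_compact _ _ (fun=> `[- K, K]%classic)) => _; exact: segment_compact.
have in_box (v : vec n) : (forall i, Rle (Rabs (v i)) K) -> (\row_i v i) \in box.
  move=> hv; rewrite inE => i /=; rewrite mxE in_itv /= -ler_norml -RabsE.
  exact/RleP.
have rowK (v : vec n) : (fun i => (\row_j v j) ord0 i) = v.
  by apply: funext => i; rewrite mxE.
have box0 : (\row_i (vzero : vec n) i) \in box.
  by apply: in_box => i; rewrite /vzero Rabs_R0; exact/RleP.
have [c _ cmin] := EVT_min_rV (ex_intro _ _ (set_mem box0)) box_compact
  (continuous_subspaceT cF).
exists (fun i => c ord0 i) => w.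
have [/in_box/cmin | /existsNP [i /Rnot_le_lt /coercive w_far]] :=
  pselect (forall i, Rle (Rabs (w i)) K).
  by rewrite rowK => /RleP.
by apply: Rle_trans w_far; move/cmin: box0; rewrite rowK => /RleP.
Qed.

End Argmin.

Open Scope R_scope.

Lemma le_of_sqr_le_mul (x c : R) : 0 <= x -> 0 <= c -> x ^ 2 <= x * c -> x <= c.
Proof. by move=> x0 c0 h; nra. Qed.

Lemma nonneg_of_affine_nonneg (A B : R) :
  0 <= B -> (forall t, 0 < t <= 1 -> 0 <= A + t * B) -> 0 <= A.
Proof.
move=> B0 hAB; apply: Rnot_lt_le => A_lt0.
pose t := - A / (B - A).
have t_def : t * (B - A) = - A by rewrite /t; field; lra.
have := hAB t; nra.
Qed.

Section VectorAlgebra.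
Context {n : nat}.
Implicit Types u v w : vec n.

Lemma dotC u v : dot u v = dot v u.
Proof. by apply: eq_bigr => i _; ring. Qed.

Lemma dot_lincomb (a b : R) u v w :
  dot (fun i => a * u i + b * v i) w = a * dot u w + b * dot v w.
Proof. by rewrite /dot !big_distrr -big_split; apply: eq_bigr => i _ /=; ring. Qed.

Lemma dot0l u : dot vzero u = 0.
Proof. by rewrite /dot big1 // => i _; rewrite /vzero; ring. Qed.

Lemma dotBr u v w : dot u (vsub v w) = dot u v - dot u w.
Proof.
have -> : vsub v w = (fun i => 1 * v i + (-1) * w i).
  by apply: funext => i; rewrite /vsub; ring.
by rewrite dotC dot_lincomb (dotC v u) (dotC w u); ring.
Qed.

Lemma dot_expand (a b c d : R) u v :
  dot (fun i => a * u i + b * v i) (fun i => c * u i + d * v i) =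
  a * c * dot u u + (a * d + b * c) * dot u v + b * d * dot v v.
Proof. by rewrite dot_lincomb !(dotC _ (fun i => _ + _)) !dot_lincomb (dotC v u); ring. Qed.

Lemma dot_vsub u v : dot (vsub u v) (vsub u v) = dot u u - 2 * dot u v + dot v v.
Proof.
have -> : vsub u v = (fun i => 1 * u i + (-1) * v i).
  by apply: funext => i; rewrite /vsub; ring.
by rewrite dot_expand; ring.
Qed.

Lemma dot_ge0 u : 0 <= dot u u.
Proof. by apply: (big_ind (fun x => 0 <= x)) => [| x y | i _]; nra. Qed.

Lemma norm_ge0 u : 0 <= norm u.
Proof. exact: sqrt_pos. Qed.

Lemma norm0 : norm (@vzero n) = 0.
Proof. by rewrite /norm dot0l sqrt_0. Qed.

Lemma norm_sqr u : norm u ^ 2 = dot u u.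
Proof. exact/pow2_sqrt/dot_ge0. Qed.

Lemma norm_vsubC u v : norm (vsub u v) = norm (vsub v u).
Proof. by rewrite /norm; congr sqrt; apply: eq_bigr => i _; rewrite /vsub; ring. Qed.

Lemma coord_le_norm u i : Rabs (u i) <= norm u.
Proof.
rewrite -sqrt_Rsqr_abs; apply: sqrt_le_1_alt; rewrite /Rsqr /dot.
rewrite (bigD1 i) //= -{1}(Rplus_0_r (u i * u i)); apply: Rplus_le_compat_l.
by apply: (big_ind (fun x => 0 <= x)) => [| x y | j _]; nra.
Qed.

Lemma Cauchy_Schwarz u v : Rabs (dot u v) <= norm u * norm v.
Proof.
have uv_sqr : dot u v ^ 2 <= dot u u * dot v v.
  have [vv0 | vv_neq0] := Req_dec (dot v v) 0.
    have v0 i : v i = 0.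
      have := coord_le_norm v i; rewrite /norm vv0 sqrt_0.
      by have := Rle_abs (v i); have := Rle_abs (- v i); rewrite Rabs_Ropp; lra.
    have uv0 : dot u v = 0 by rewrite /dot big1 // => i _; rewrite v0; ring.
    by rewrite uv0 vv0; nra.
  have := dot_ge0 (fun i => dot v v * u i + (- dot u v) * v i).
  rewrite dot_expand; have := dot_ge0 v; nra.
rewrite -sqrt_Rsqr_abs /norm -sqrt_mult_alt; last exact: dot_ge0.
by apply: sqrt_le_1_alt; rewrite /Rsqr; nra.
Qed.

End VectorAlgebra.

Section MaxOfFinitelyMany.
Variables (m : nat) (F : nat -> R).

Lemma maxn_R_ge i : (i < m)%nat -> F i <= maxn_R m F.
Proof.
elim: m => [|[|k] IH] //=; first by rewrite ltnS leqn0 => /eqP ->; lra.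
rewrite ltnS leq_eqVlt => /orP [/eqP -> | /IH]; first exact: Rmax_r.
by move/Rle_trans; apply; apply: Rmax_l.
Qed.

Lemma maxn_R_le B : (0 < m)%nat -> (forall i, (i < m)%nat -> F i <= B) -> maxn_R m F <= B.
Proof.
elim: m => [|[|k] IH] //= _ FB; first exact: FB.
by apply: Rmax_lub; [apply: IH => // i /ltnW; apply: FB | apply: FB].
Qed.

End MaxOfFinitelyMany.

Arguments maxn_R_ge {m} F {i}.

Lemma maxn_R_le_shift (m : nat) (F G : nat -> R) (c : R) : (0 < m)%nat ->
  (forall i, (i < m)%nat -> F i <= G i + c) -> maxn_R m F <= maxn_R m G + c.
Proof.
move=> m_gt0 FG; apply: maxn_R_le => // i lt_im.
by apply: Rle_trans (FG i lt_im) _; apply: Rplus_le_compat_r; apply: maxn_R_ge.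
Qed.

Section SteepestDescent.
Context {n : nat} (m : nat) (grad : nat -> vec n -> vec n).
Hypothesis m_gt0 : (0 < m)%nat.

Definition sd_max (x w : vec n) : R := maxn_R m (fun i => dot w (grad i x)).

Lemma sd_max_sublinear x (a b : R) v w : 0 <= a -> 0 <= b ->
  sd_max x (fun i => a * v i + b * w i) <= a * sd_max x v + b * sd_max x w.
Proof.
move=> a0 b0; apply: maxn_R_le => // i lt_im; rewrite dot_lincomb.
have := maxn_R_ge (fun i => dot v (grad i x)) lt_im.
have := maxn_R_ge (fun i => dot w (grad i x)) lt_im.
rewrite -/(sd_max x v) -/(sd_max x w); nra.
Qed.

Lemma sd_max0 x : sd_max x vzero = 0.
Proof.
apply: Rle_antisym.
  by apply: maxn_R_le => // i _; rewrite dot0l; lra.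
by have := maxn_R_ge (fun i => dot vzero (grad i x)) m_gt0; rewrite dot0l.
Qed.

Lemma sd_max_lower_bound x w : - (norm w * norm (grad 0%N x)) <= sd_max x w.
Proof.
apply: Rle_trans (maxn_R_ge (fun i => dot w (grad i x)) m_gt0).
have := Cauchy_Schwarz w (grad 0%N x); have := Rle_abs (- dot w (grad 0%N x)).
rewrite Rabs_Ropp; lra.
Qed.

Definition grads_close (y z : vec n) (e : R) : Prop :=
  forall i, (i < m)%nat -> norm (vsub (grad i y) (grad i z)) <= e.

Lemma grads_closeC {y z e} : grads_close y z e -> grads_close z y e.
Proof. by move=> close i /close; rewrite norm_vsubC. Qed.

Lemma sd_max_shift {x y e} w : grads_close x y e ->
  sd_max x w <= sd_max y w + norm w * e.
Proof.
move=> close; apply: maxn_R_le_shift => // i lt_im.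
have := Cauchy_Schwarz w (vsub (grad i x) (grad i y)); rewrite dotBr.
have := Rle_abs (dot w (grad i x) - dot w (grad i y)).
have := close i lt_im; have := norm_ge0 w; nra.
Qed.

Lemma sd_obj_continuous x :
  continuous (fun v : 'rV[R]_n => sd_obj m grad x (fun i => v ord0 i)).
Proof.
rewrite /sd_obj; under eq_fun do rewrite norm_sqr.
apply: continuous_Rplus; first apply: continuous_maxn_R => i.
  apply: continuous_bigRplus => j; apply: continuous_Rmult; first exact: coord_continuous.
  exact: cst_continuous.
apply: continuous_Rmult; first exact: cst_continuous.
by apply: continuous_bigRplus => j; apply: continuous_Rmult; exact: coord_continuous.
Qed.

Lemma sd_obj_has_min x : exists v, forall w, sd_obj m grad x v <= sd_obj m grad x w.
Proof.
set G := norm (grad 0%N x); have G0 : 0 <= G by apply: norm_ge0.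
apply: (@exists_argmin_box n _ (2 * G)); [lra | exact: sd_obj_continuous |].
move=> v i /(Rlt_le_trans _ _ _)/(_ (coord_le_norm v i)) v_big.
rewrite /sd_obj -/(sd_max x vzero) -/(sd_max x v) sd_max0 norm0.
have := sd_max_lower_bound x v; rewrite -/G; nra.
Qed.

Notation Lam := (Lambda m grad).

Lemma Lambda_min x w : sd_obj m grad x (Lam x) <= sd_obj m grad x w.
Proof. exact: (epsilon_spec (inhabits vzero) _ (sd_obj_has_min x)). Qed.

Lemma Lambda_first_order x w :
  sd_max x (Lam x) + dot (Lam x) (Lam x) <= sd_max x w + dot (Lam x) w.
Proof.
set v := Lam x.
pose A := sd_max x w - sd_max x v - dot v v + dot v w.
pose B := / 2 * dot (vsub v w) (vsub v w).
suff : 0 <= A by rewrite /A; lra.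
apply: (@nonneg_of_affine_nonneg _ B); first by have := dot_ge0 (vsub v w); rewrite /B; lra.
move=> t [t_gt0 t_le1].
have conv := @sd_max_sublinear x (1 - t) t v w ltac:(lra) ltac:(lra).
have opt := Lambda_min x (fun i => (1 - t) * v i + t * w i).
rewrite /sd_obj !norm_sqr dot_expand -/v -/(sd_max x v) -/(sd_max x _) in opt.
have : 0 <= t * (A + t * B) by rewrite /A /B dot_vsub; nra.
nra.
Qed.

Lemma sd_max_Lambda x : sd_max x (Lam x) = - dot (Lam x) (Lam x).
Proof.
set v := Lam x.
have := Lambda_first_order x vzero; rewrite sd_max0 dotC dot0l -/v.
have := Lambda_first_order x (fun i => 2 * v i + 0 * v i).
rewrite dotC dot_lincomb -/v.
have := @sd_max_sublinear x 2 0 v v ltac:(lra) ltac:(lra).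
lra.
Qed.

Lemma Lambda_variational x w : 0 <= sd_max x w + dot (Lam x) w.
Proof. by have := Lambda_first_order x w; rewrite sd_max_Lambda; lra. Qed.

Lemma norm_Lambda_le x : norm (Lam x) <= norm (grad 0%N x).
Proof.
apply: le_of_sqr_le_mul; try exact: norm_ge0.
by have := sd_max_Lambda x; have := sd_max_lower_bound x (Lam x); rewrite norm_sqr; lra.
Qed.

Lemma Lambda_dist_sqr {y z e} : grads_close y z e ->
  norm (vsub (Lam y) (Lam z)) ^ 2 <= (norm (Lam y) + norm (Lam z)) * e.
Proof.
move=> close; rewrite norm_sqr dot_vsub.
have := sd_max_Lambda y; have := sd_max_Lambda z.
have := Lambda_variational y (Lam z); have := Lambda_variational z (Lam y).
have := sd_max_shift (Lam z) close; have := sd_max_shift (Lam y) (grads_closeC close).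
rewrite (dotC (Lam z)); nra.
Qed.

Lemma norm_Lambda_shift {y z e} : grads_close y z e -> norm (Lam z) <= norm (Lam y) + e.
Proof.
move=> close.
have e_ge0 : 0 <= e := Rle_trans _ _ _ (norm_ge0 _) (close _ m_gt0).
apply: le_of_sqr_le_mul; [exact: norm_ge0 | have := norm_ge0 (Lam y); lra |].
have := sd_max_Lambda z; have := Lambda_variational y (Lam z).
have := sd_max_shift (Lam z) close; have := Cauchy_Schwarz (Lam y) (Lam z).
have := Rle_abs (dot (Lam y) (Lam z)); rewrite norm_sqr; nra.
Qed.

Lemma norm_Lambda_lipschitz {y z e} :
  grads_close y z e -> Rabs (norm (Lam y) - norm (Lam z)) <= e.
Proof.
move=> close; apply: Rabs_le.
have := norm_Lambda_shift close; have := norm_Lambda_shift (grads_closeC close).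
lra.
Qed.

End SteepestDescent.

Theorem theorem3p1 (n m : nat) (Omega W : vec n -> Prop)
  (f : nat -> vec n -> R) (grad : nat -> vec n -> vec n) (L M : R) :
  (0 < m)%nat ->
  is_open Omega ->
  (forall i x, (i < m)%nat -> Omega x -> has_gradient (f i) x (grad i x)) ->
  (forall x, W x -> Omega x) ->
  is_convex W ->
  is_bounded W ->
  0 <= L ->
  (forall i y z, (i < m)%nat -> W y -> W z ->
     norm (vsub (grad i y) (grad i z)) <= L * norm (vsub y z)) ->
  is_lub (fun r => exists i x, (i < m)%nat /\ W x /\ r = norm (grad i x)) M ->
  forall y z, W y -> W z ->
    norm (vsub (Lambda m grad y) (Lambda m grad z))
      <= sqrt (2 * L * M) * sqrt (norm (vsub y z))
    /\ Rabs (norm (Lambda m grad y) - norm (Lambda m grad z))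
      <= L * norm (vsub y z).
Proof.
move=> m_gt0 _ _ _ _ _ L_ge0 grad_lip [M_ub _] y z Wy Wz.
set d := norm (vsub y z); have d_ge0 : 0 <= d := norm_ge0 _.
have close : grads_close m grad y z (L * d) by move=> i lt_im; exact: grad_lip.
split; last exact: (norm_Lambda_lipschitz m grad m_gt0 close).
have Lambda_le_M x : W x -> norm (Lambda m grad x) <= M.
  move=> Wx; apply: Rle_trans (norm_Lambda_le m grad m_gt0 x) _.
  by apply: M_ub; exists 0%N, x.
have sum_le : norm (Lambda m grad y) + norm (Lambda m grad z) <= 2 * M.
  by have := Lambda_le_M y Wy; have := Lambda_le_M z Wz; lra.
have M_ge0 : 0 <= M.
  by have := Lambda_le_M y Wy; have := norm_ge0 (Lambda m grad y); lra.
have Ld_ge0 : 0 <= L * d by nra.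
rewrite -sqrt_mult_alt; last nra.
rewrite {1}/norm; apply: sqrt_le_1_alt; rewrite -norm_sqr.
by apply: Rle_trans (Lambda_dist_sqr m grad m_gt0 close) _; nra.
Qed.
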